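(* Let $d\ge 1$ and $n,k\ge 0$ be integers. Let $\mathcal{L}_{\leq d}(n,k)$ be the set of lonesum $0$-$1$ matrices with $n$ rows and $k$ columns that have no all-zero row and no all-zero column, and in which at most $d$ columns are of the same type and at most $d$ rows are of the same type. Then \[ |\mathcal{L}_{\leq d}(n,k)|=\sum_{m=0}^{\min(n,k)} m!\,S_{\leq d}(n,m)\; m!\,S_{\leq d}(k,m). \]
   Context: A $0$-$1$ matrix is lonesum if it is uniquely determined by its vector of row sums and its vector of column sums; equivalently, it contains no $2\times 2$ submatrix (rows $i<i'$, columns $j<j'$) equal to $\begin{pmatrix}1&0\\0&1\end{pmatrix}$ or $\begin{pmatrix}0&1\\1&0\end{pmatrix}$. The type of a column (resp. row) is the column (resp. row) vector itself; two columns have the same type iff they are identical vectors. $S_{\leq d}(n,m)$ denotes the restricted Stirling number of the second kind: the number of partitions of an $n$-element set into $m$ non-empty blocks each of size at most $d$ (with $S_{\le d}(0,0)=1$). *)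

From mathcomp Require Import all_boot all_order all_algebra.
Set Implicit Arguments. Unset Strict Implicit. Unset Printing Implicit Defensive.

Definition lonesum (n k : nat) (A : 'M[bool]_(n, k)) : bool :=
  [forall i : 'I_n, forall i' : 'I_n, forall j : 'I_k, forall j' : 'I_k,
     ((i < i') && (j < j')) ==>
     ~~ ( (A i j && ~~ A i j' && ~~ A i' j && A i' j')
       || (~~ A i j && A i j' && A i' j && ~~ A i' j') )].

Definition no_zero_row (n k : nat) (A : 'M[bool]_(n, k)) : bool :=
  [forall i : 'I_n, exists j : 'I_k, A i j].

Definition no_zero_col (n k : nat) (A : 'M[bool]_(n, k)) : bool :=
  [forall j : 'I_k, exists i : 'I_n, A i j].

Definition col_types_le (d n k : nat) (A : 'M[bool]_(n, k)) : bool :=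
  [forall j : 'I_k, #|[set j' : 'I_k | col j' A == col j A]| <= d].

Definition row_types_le (d n k : nat) (A : 'M[bool]_(n, k)) : bool :=
  [forall i : 'I_n, #|[set i' : 'I_n | row i' A == row i A]| <= d].

Definition Lset (d n k : nat) : {set 'M[bool]_(n, k)} :=
  [set A : 'M[bool]_(n, k) | [&& lonesum A, no_zero_row A, no_zero_col A,
                               col_types_le d A & row_types_le d A]].

Definition stirling2_le (d n m : nat) : nat :=
  #|[set P : {set {set 'I_n}} | [&& partition P [set: 'I_n], #|P| == m
                                  & [forall B in P, #|B| <= d]]]|.

From mathcomp Require Import all_boot all_order all_algebra.
From mathcomp Require Import zify.
Set Implicit Arguments. Unset Strict Implicit. Unset Printing Implicit Defensive.

(* A lonesum matrix contains no 2x2 switch, so its row supports form a chain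
   under inclusion.  If the chain has m distinct members, let f i be the
   position of the support of row i in the chain and s j the position of the
   first member containing column j; then A i j holds exactly when s j <= f i.
   Without zero rows and columns, f and s are surjections onto {0, ..., m-1},
   every pair of such surjections arises from exactly one matrix, and two rows
   (columns) have the same type iff f (s) agrees on them, so the type bounds
   become bounds on the fibers.  Finally, surjections onto an m-set whose
   fibers have size at most d number m! S_{<=d}(n, m): the fibers form a
   partition into m blocks of size at most d, labelled in m! ways. *)

Lemma card_ord_lt m x : x <= m -> #|[set t : 'I_m | t < x]| = x.
Proof.
move=> le_xm; have -> : [set t : 'I_m | t < x] = widen_ord le_xm @: [set: 'I_x].
  apply/setP => t; rewrite inE; apply/idP/imsetP => [lt_tx | [u _ ->]].
    by exists (Ordinal lt_tx) => //; apply: val_inj.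
  by rewrite /= ltn_ord.
rewrite card_imset ?cardsT ?card_ord // => u v /(congr1 val) eq_uv.
exact: val_inj.
Qed.

Lemma onto_of_inj_lt_card (T : finType) (S : {pred T}) (F : T -> nat) :
  {in S &, injective F} -> {in S, forall x, F x < #|S|} ->
  forall t, t < #|S| -> exists2 x, x \in S & F x = t.
Proof.
move=> injF ltF t lt_tS.
have uniqF : uniq [seq F x | x <- enum S].
  by rewrite map_inj_in_uniq ?enum_uniq // => x y; rewrite !mem_enum; exact: injF.
have subF : {subset [seq F x | x <- enum S] <= iota 0 #|S|}.
  by move=> y /mapP [x]; rewrite mem_enum => xS ->; rewrite mem_iota add0n ltF.
have sizeF : size (iota 0 #|S|) <= size [seq F x | x <- enum S].
  by rewrite size_iota size_map cardE.
have [_ eqF] := uniq_min_size uniqF subF sizeF.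
have /mapP [x] : t \in [seq F x | x <- enum S] by rewrite eqF mem_iota add0n.
by rewrite mem_enum => xS ->; exists x.
Qed.

Lemma setId_imset (aT rT : finType) (g : aT -> rT) (D : {set aT}) (P : pred rT) :
  [set y in g @: D | P y] = g @: [set x in D | P (g x)].
Proof.
apply/setP => y; rewrite inE; apply/andP/imsetP => [[/imsetP [x xD ->] Pgx] | [x]].
  by exists x; rewrite // inE xD.
by rewrite inE => /andP [xD Pgx] ->; split => //; exact: imset_f.
Qed.

Section Fibers.
Variables (aT rT : finType) (f : aT -> rT).
Hypothesis f_onto : forall t, exists i, f i = t.

Definition fibers : {set {set aT}} := [set f @^-1: [set t] | t in [set: rT]].

Lemma preimset1_inj : injective (fun t => f @^-1: [set t]).
Proof.
move=> t t' eq_tt'; have [i fi] := f_onto t.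
have : i \in f @^-1: [set t'] by rewrite -eq_tt' !inE fi.
by rewrite !inE fi => /eqP.
Qed.

Lemma fibers_partition : partition fibers [set: aT].
Proof.
apply/and3P; split.
- apply/eqP/setP => i; rewrite inE; apply/bigcupP.
  by exists (f @^-1: [set f i]); [exact: imset_f | rewrite !inE].
- apply/trivIsetP => _ _ /imsetP [t _ ->] /imsetP [t' _ ->] neq_tt'.
  rewrite disjoints_subset; apply/subsetP => i; rewrite !inE => /eqP ->.
  by apply: contraNneq neq_tt' => <-.
- apply/imsetP => -[t _ eq0]; have [i fi] := f_onto t.
  have : i \in f @^-1: [set t] by rewrite !inE fi.
  by rewrite -eq0 inE.
Qed.

End Fibers.

Lemma partition_labelling (aT rT : finType) (P : {set {set aT}}) (g : rT -> {set aT}) :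
  partition P [set: aT] -> injective g -> g @: [set: rT] = P ->
  exists f : {ffun aT -> rT}, forall t, f @^-1: [set t] = g t.
Proof.
case/and3P => /eqP coverP trivP _ g_inj imgP.
have blockP i : exists t, pblock P i = g t.
  have : pblock P i \in P by rewrite pblock_mem // coverP inE.
  by rewrite -imgP => /imsetP [t _ ->]; exists t.
have [h hP] := fin_all_exists blockP.
exists (finfun h) => t; apply/setP => i; rewrite !inE ffunE.
apply/eqP/idP => [<- | it]; first by rewrite -hP mem_pblock coverP inE.
by apply: g_inj; rewrite -hP; apply: def_pblock => //; rewrite -imgP imset_f.
Qed.

Definition surj_le (d n m : nat) : {set {ffun 'I_n -> 'I_m}} :=
  [set f : {ffun 'I_n -> 'I_m} | [forall t, 0 < #|f @^-1: [set t]| <= d]].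

Definition bounded_partitions (d n m : nat) : {set {set {set 'I_n}}} :=
  [set P | [&& partition P [set: 'I_n], #|P| == m & [forall B in P, #|B| <= d]]].

Section SurjLe.
Variables d n m : nat.
Implicit Type f : {ffun 'I_n -> 'I_m}.

Lemma surj_leP f :
  reflect (forall t, 0 < #|f @^-1: [set t]| <= d) (f \in surj_le d n m).
Proof. by rewrite inE; apply: forallP. Qed.

Lemma surj_le_onto f : f \in surj_le d n m -> forall t, exists i, f i = t.
Proof.
move=> /surj_leP f_le t; have /andP [/card_gt0P [i]] := f_le t.
by rewrite !inE => /eqP fi _; exists i.
Qed.

Lemma onto_surj_leE f : (forall t, exists i, f i = t) ->
  (f \in surj_le d n m) = [forall i, #|f @^-1: [set f i]| <= d].
Proof.
move=> f_onto; apply/surj_leP/forallP => [f_le i | f_le t].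
  by case/andP: (f_le (f i)).
have [i <-] := f_onto t; rewrite f_le andbT card_gt0.
by apply/set0Pn; exists i; rewrite !inE.
Qed.

Lemma fibers_bounded_partitions f :
  f \in surj_le d n m -> fibers f \in bounded_partitions d n m.
Proof.
move=> fS; have f_onto := surj_le_onto fS.
rewrite inE fibers_partition //= card_imset ?cardsT ?card_ord ?eqxx //=;
  last exact: preimset1_inj.
by apply/forall_inP => _ /imsetP [t _ ->]; case/andP: (surj_leP _ fS t).
Qed.

Lemma card_surj_le_fibers P : P \in bounded_partitions d n m ->
  #|[set f in surj_le d n m | fibers f == P]| = m`!.
Proof.
rewrite inE => /and3P [partP /eqP cardP /forall_inP P_le].
have /and3P [_ _ P_neq0] := partP.
pose phi f := [ffun t => f @^-1: [set t]].
have phi_inj : injective phi.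
  move=> f f' eq_ff'; apply/ffunP => i; apply/eqP.
  have : i \in phi f (f i) by rewrite ffunE !inE.
  by rewrite eq_ff' ffunE !inE eq_sym.
rewrite -(card_imset _ phi_inj).
suff -> : phi @: [set f in surj_le d n m | fibers f == P]
          = [set g in ffun_on (mem P) | injectiveb g].
  by rewrite card_inj_ffuns_on cardP card_ord ffactnn.
apply/setP => g; apply/imsetP/idP => [[f] | ].
  rewrite inE => /andP [fS /eqP <-] ->; rewrite inE; apply/andP; split.
    by apply/ffun_onP => t; rewrite ffunE; exact: imset_f.
  apply/injectiveP; apply: eq_inj (preimset1_inj (surj_le_onto fS)) _ => t.
  by rewrite ffunE.
rewrite inE => /andP [/ffun_onP gP /injectiveP g_inj].
have imgP : g @: [set: 'I_m] = P.
  apply/eqP; rewrite eqEcard card_imset // cardsT card_ord cardP leqnn andbT.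
  by apply/subsetP => _ /imsetP [t _ ->]; exact: gP.
have [f fibP] := partition_labelling partP g_inj imgP.
exists f; last by apply/ffunP => t; rewrite ffunE fibP.
rewrite inE; apply/andP; split.
  apply/surj_leP => t; rewrite fibP P_le ?gP // andbT card_gt0.
  by apply: contraNneq P_neq0 => <-; exact: gP.
by apply/eqP; rewrite /fibers -imgP; apply: eq_imset => t; exact: fibP.
Qed.

Lemma card_surj_le : #|surj_le d n m| = m`! * stirling2_le d n m.
Proof.
rewrite -sum1_card (partition_big (fun f : {ffun 'I_n -> 'I_m} => fibers f)
                                  (mem (bounded_partitions d n m)));
  last exact: fibers_bounded_partitions.
rewrite /stirling2_le -/(bounded_partitions d n m) mulnC -sum_nat_const.
apply: eq_bigr => P PS.
by rewrite -(card_surj_le_fibers PS) -sum1_card; apply: eq_bigl => f; rewrite inE.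
Qed.

End SurjLe.

Lemma surj_le_empty d k m : k < m -> surj_le d k m = set0.
Proof.
move=> lt_km; apply/setP => f; rewrite in_set0; apply/negbTE/negP => fS.
have [g fgK] := fin_all_exists (surj_le_onto fS).
by have := leq_card g (can_inj fgK); rewrite !card_ord leqNgt lt_km.
Qed.

Section RowSupports.
Variables n k : nat.
Implicit Type A : 'M[bool]_(n, k).

Definition row_support A i : {set 'I_k} := [set j | A i j].
Definition row_supports A : {set {set 'I_k}} := [set row_support A i | i in [set: 'I_n]].
Definition row_rank A i := #|[set S in row_supports A | S \proper row_support A i]|.
Definition col_rank A j := #|[set S in row_supports A | j \notin S]|.

Lemma row_rank_lt A i : row_rank A i < #|row_supports A|.
Proof.
apply: proper_card; apply/properP; split; first by apply/subsetP => S; rewrite inE => /andP [].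
by exists (row_support A i); [exact: imset_f | rewrite inE properxx andbF].
Qed.

Lemma col_rank_lt A j : no_zero_col A -> col_rank A j < #|row_supports A|.
Proof.
move=> /forallP /(_ j) /existsP [i Aij].
apply: proper_card; apply/properP; split; first by apply/subsetP => S; rewrite inE => /andP [].
by exists (row_support A i); [exact: imset_f | rewrite !inE Aij andbF].
Qed.

Lemma row_rank_mono A i i' :
  row_support A i \subset row_support A i' -> row_rank A i <= row_rank A i'.
Proof.
move=> sub_ii'; apply/subset_leq_card/subsetP => S; rewrite !inE => /andP [-> S_ii] /=.
exact: proper_sub_trans S_ii sub_ii'.
Qed.

Lemma row_rank_strict A i i' :
  row_support A i \proper row_support A i' -> row_rank A i < row_rank A i'.
Proof.
move=> lt_ii'; apply: proper_card; apply/properP; split.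
  apply/subsetP => S; rewrite !inE => /andP [-> S_ii] /=.
  exact: proper_trans S_ii lt_ii'.
by exists (row_support A i); rewrite !inE ?properxx ?andbF ?lt_ii' ?andbT //; exact: imset_f.
Qed.

Section Lonesum.
Variable A : 'M[bool]_(n, k).
Hypothesis A_lonesum : lonesum A.

Lemma lonesum_cross i i' j j' : A i j -> A i' j' -> A i j' || A i' j.
Proof.
move=> Aij Ai'j'.
have switch_free (a a' : 'I_n) (b b' : 'I_k) : a < a' -> b < b' ->
    ~~ ((A a b && ~~ A a b' && ~~ A a' b && A a' b')
        || (~~ A a b && A a b' && A a' b && ~~ A a' b')).
  move=> lt_aa' lt_bb'; move/forallP: A_lonesum => /(_ a) /forallP /(_ a').
  by move=> /forallP /(_ b) /forallP /(_ b') /implyP; apply; rewrite lt_aa'.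
case: (ltngtP i i') => [lt_ii' | lt_ii' | /val_inj eq_ii']; last by rewrite eq_ii' Ai'j'.
all: case: (ltngtP j j') => [lt_jj' | lt_jj' | /val_inj eq_jj']; last by rewrite -eq_jj' Aij.
all: move: (switch_free _ _ _ _ lt_ii' lt_jj'); rewrite Aij Ai'j'.
all: by case: (A i j'); case: (A i' j).
Qed.

Lemma row_supports_chain i i' :
  (row_support A i \subset row_support A i') || (row_support A i' \subset row_support A i).
Proof.
case: (boolP (row_support A i \subset row_support A i')) => //= /subsetPn [j].
rewrite !inE => Aij Ai'j; apply/subsetP => j'; rewrite !inE => Aij'.
by move: (lonesum_cross Aij Aij'); rewrite (negbTE Ai'j) orbF.
Qed.

Lemma row_support_proper i i' j :
  A i j -> ~~ A i' j -> row_support A i' \proper row_support A i.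
Proof.
move=> Aij Ai'j; have not_sub : ~~ (row_support A i \subset row_support A i').
  by apply/subsetPn; exists j; rewrite inE.
by move: (row_supports_chain i i'); rewrite properE not_sub (negbTE not_sub) andbT.
Qed.

Lemma lonesum_entry i j : A i j = (col_rank A j <= row_rank A i).
Proof.
case: (boolP (A i j)) => Aij; apply/esym.
  apply/subset_leq_card/subsetP => S; rewrite !inE => /andP [/imsetP [i' _ ->] Ai'j].
  rewrite inE in Ai'j; apply/andP; split; [exact: imset_f | exact: row_support_proper Aij Ai'j].
apply/negbTE; rewrite -ltnNge; apply: proper_card; apply/properP; split.
  apply/subsetP => S; rewrite !inE => /andP [-> S_i] /=.
  by apply: contra Aij => jS; have := subsetP (proper_sub S_i) j jS; rewrite inE.
by exists (row_support A i); rewrite !inE ?properxx ?andbF ?Aij ?andbT //; exact: imset_f.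
Qed.

Lemma row_rank_inj i i' :
  row_rank A i = row_rank A i' -> row_support A i = row_support A i'.
Proof.
move=> eq_rank; apply/eqP/negPn/negP => neq_supp.
case/orP: (row_supports_chain i i') => sub.
  have lt_ii' : row_support A i \proper row_support A i' by rewrite properEneq neq_supp.
  by have := row_rank_strict lt_ii'; rewrite eq_rank ltnn.
have lt_i'i : row_support A i' \proper row_support A i by rewrite properEneq eq_sym neq_supp.
by have := row_rank_strict lt_i'i; rewrite eq_rank ltnn.
Qed.

Lemma row_rank_onto t : t < #|row_supports A| -> exists i, row_rank A i = t.
Proof.
pose F (S : {set 'I_k}) := #|[set S' in row_supports A | S' \proper S]|.
have F_inj : {in row_supports A &, injective F}.
  by move=> _ _ /imsetP [i _ ->] /imsetP [i' _ ->]; exact: row_rank_inj.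
have F_lt : {in row_supports A, forall S, F S < #|row_supports A|}.
  by move=> _ /imsetP [i _ ->]; exact: row_rank_lt.
by move=> /(onto_of_inj_lt_card F_inj F_lt) [_ /imsetP [i _ ->] <-]; exists i.
Qed.

Lemma col_rank_onto t :
  no_zero_row A -> t < #|row_supports A| -> exists j, col_rank A j = t.
Proof.
move=> /forallP nz_row lt_t; have [i rank_i] := row_rank_onto lt_t.
case: t lt_t rank_i => [|t] lt_t rank_i.
  have /existsP [j Aij] := nz_row i; exists j.
  by move: Aij; rewrite lonesum_entry rank_i leqn0 => /eqP.
have [i' rank_i'] := row_rank_onto (ltnW lt_t).
have /subsetPn [j] : ~~ (row_support A i \subset row_support A i').
  by apply: contraL (leqnn t.+1) => /row_rank_mono; rewrite rank_i rank_i' ltnNge => ->.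
rewrite !inE !lonesum_entry rank_i rank_i' => le_jt lt_tj; exists j; lia.
Qed.

End Lonesum.
End RowSupports.

Definition threshold_mx n k m (f : 'I_n -> 'I_m) (s : 'I_k -> 'I_m) : 'M[bool]_(n, k) :=
  \matrix_(i, j) (s j <= f i).

Section ThresholdMatrix.
Variables n k m : nat.
Variables (f : {ffun 'I_n -> 'I_m}) (s : {ffun 'I_k -> 'I_m}).
Hypotheses (f_onto : forall t, exists i, f i = t) (s_onto : forall t, exists j, s j = t).

Let A := threshold_mx f s.
Let below (t : 'I_m) : {set 'I_k} := [set j | s j <= t].

Lemma row_support_threshold i : row_support A i = below (f i).
Proof. by apply/setP => j; rewrite !inE mxE. Qed.

Lemma row_supports_threshold : row_supports A = below @: [set: 'I_m].
Proof.
apply/setP => S; apply/imsetP/imsetP => [[i _ ->] | [t _ ->]].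
  by exists (f i); rewrite ?row_support_threshold.
by have [i <-] := f_onto t; exists i; rewrite ?row_support_threshold.
Qed.

Lemma below_subset t t' : (below t \subset below t') = (t <= t').
Proof.
apply/subsetP/idP => [sub | le_tt' j]; last by rewrite !inE => /leq_trans; apply.
by have [j sj] := s_onto t; have := sub j; rewrite !inE sj leqnn => /(_ isT).
Qed.

Lemma below_inj : injective below.
Proof.
by move=> t t' eq_tt'; apply/val_inj/anti_leq; rewrite -!below_subset eq_tt' subxx.
Qed.

Lemma card_below_lt x : x <= m -> #|below @: [set t : 'I_m | t < x]| = x.
Proof. by move=> le_xm; rewrite card_imset ?card_ord_lt //; exact: below_inj. Qed.

Lemma card_row_supports_threshold : #|row_supports A| = m.
Proof. by rewrite row_supports_threshold card_imset ?cardsT ?card_ord //; exact: below_inj. Qed.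

Lemma row_rank_threshold i : row_rank A i = f i.
Proof.
rewrite /row_rank row_supports_threshold row_support_threshold setId_imset.
suff -> : [set t in [set: 'I_m] | below t \proper below (f i)] = [set t : 'I_m | t < f i].
  exact: card_below_lt (ltnW (ltn_ord (f i))).
by apply/setP => t; rewrite !inE properE !below_subset -ltnNge /=; apply/andb_idl/ltnW.
Qed.

Lemma col_rank_threshold j : col_rank A j = s j.
Proof.
rewrite /col_rank row_supports_threshold setId_imset.
suff -> : [set t in [set: 'I_m] | j \notin below t] = [set t : 'I_m | t < s j].
  exact: card_below_lt (ltnW (ltn_ord (s j))).
by apply/setP => t; rewrite !inE -ltnNge.
Qed.

Lemma threshold_row_eq i i' : (row i A == row i' A) = (f i == f i').
Proof.
apply/eqP/eqP => [eq_row | eq_f]; last by apply/rowP => j; rewrite !mxE eq_f.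
have le_f (a b : 'I_n) : row a A = row b A -> f a <= f b.
  move=> eq_ab; have [j sj] := s_onto (f a).
  by have := congr1 (fun r : 'rV_k => r ord0 j) eq_ab; rewrite /= !mxE sj leqnn => <-.
by apply/val_inj/anti_leq; rewrite !le_f.
Qed.

Lemma threshold_col_eq j j' : (col j A == col j' A) = (s j == s j').
Proof.
apply/eqP/eqP => [eq_col | eq_s]; last by apply/colP => i; rewrite !mxE eq_s.
have le_s (a b : 'I_k) : col a A = col b A -> s b <= s a.
  move=> eq_ab; have [i fi] := f_onto (s a).
  by have := congr1 (fun c : 'cV_n => c i ord0) eq_ab; rewrite /= !mxE fi leqnn => <-.
by apply/val_inj/anti_leq; rewrite !le_s.
Qed.

Lemma threshold_mx_Lset d :
  (A \in Lset d n k) = (f \in surj_le d n m) && (s \in surj_le d k m).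
Proof.
have lonesumA : lonesum A.
  apply/'forall_forallP => i i'; apply/'forall_forallP => j j'.
  by apply/implyP => _; rewrite !mxE; lia.
have nz_row : no_zero_row A.
  by apply/forallP => i; have [j sj] := s_onto (f i); apply/existsP; exists j; rewrite mxE sj.
have nz_col : no_zero_col A.
  by apply/forallP => j; have [i fi] := f_onto (s j); apply/existsP; exists i; rewrite mxE fi.
have col_classes j : [set j' | col j' A == col j A] = s @^-1: [set s j].
  by apply/setP => j'; rewrite !inE threshold_col_eq.
have row_classes i : [set i' | row i' A == row i A] = f @^-1: [set f i].
  by apply/setP => i'; rewrite !inE threshold_row_eq.
rewrite inE lonesumA nz_row nz_col /= !onto_surj_leE // andbC.
by congr (_ && _); apply: eq_forallb => x; rewrite ?col_classes ?row_classes.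
Qed.

End ThresholdMatrix.

Lemma Lset_threshold d n k (A : 'M[bool]_(n, k)) : A \in Lset d n k ->
  exists2 fs, fs \in setX (surj_le d n #|row_supports A|) (surj_le d k #|row_supports A|)
              & A = threshold_mx fs.1 fs.2.
Proof.
move=> AL; have := AL; rewrite inE => /and5P [lonesumA nz_row nz_col _ _].
pose f := [ffun i => Ordinal (row_rank_lt A i)].
pose s := [ffun j => Ordinal (col_rank_lt j nz_col)].
have eqA : threshold_mx f s = A.
  by apply/matrixP => i j; rewrite mxE !ffunE /= lonesum_entry.
have f_onto t : exists i, f i = t.
  have [i rank_i] := row_rank_onto lonesumA (ltn_ord t).
  by exists i; apply: val_inj; rewrite ffunE.
have s_onto t : exists j, s j = t.
  have [j rank_j] := col_rank_onto lonesumA nz_row (ltn_ord t).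
  by exists j; apply: val_inj; rewrite ffunE.
by exists (f, s); rewrite // inE -threshold_mx_Lset // eqA.
Qed.

Lemma card_Lset_rank d n k m :
  #|[set A in Lset d n k | #|row_supports A| == m]| = #|surj_le d n m| * #|surj_le d k m|.
Proof.
rewrite -cardsX.
have -> : [set A in Lset d n k | #|row_supports A| == m]
          = [set threshold_mx fs.1 fs.2 | fs : {ffun 'I_n -> 'I_m} * {ffun 'I_k -> 'I_m}
                                           in setX (surj_le d n m) (surj_le d k m)].
  apply/setP => A; rewrite inE; apply/andP/imsetP => [[AL /eqP <-] | [[f s]]].
    exact: Lset_threshold.
  rewrite in_setX => /andP [fS sS] -> /=.
  have f_onto := surj_le_onto fS; have s_onto := surj_le_onto sS.
  by rewrite threshold_mx_Lset // fS sS card_row_supports_threshold.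
apply: card_in_imset => -[f s] [f' s'].
rewrite !in_setX => /andP [fS sS] /andP [fS' sS'] /= eqA.
have [f_onto s_onto] := (surj_le_onto fS, surj_le_onto sS).
have [f'_onto s'_onto] := (surj_le_onto fS', surj_le_onto sS').
congr (_, _); apply/ffunP => x; apply: val_inj => /=.
  by rewrite -(row_rank_threshold f_onto s_onto) eqA (row_rank_threshold f'_onto s'_onto).
by rewrite -(col_rank_threshold f_onto s_onto) eqA (col_rank_threshold f'_onto s'_onto).
Qed.

Lemma card_Lset d n k :
  #|Lset d n k| = \sum_(0 <= m < n.+1) #|surj_le d n m| * #|surj_le d k m|.
Proof.
have le_rank_n (A : 'M[bool]_(n, k)) : #|row_supports A| <= n.
  by apply: leq_trans (leq_imset_card _ _) _; rewrite cardsT card_ord.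
rewrite -sum1_card (partition_big (fun A => inord #|row_supports A| : 'I_n.+1) predT) //.
rewrite big_mkord; apply: eq_bigr => m _; rewrite -card_Lset_rank -sum1_card.
by apply: eq_bigl => A; rewrite inE -val_eqE /= inordK // ltnS.
Qed.

Theorem theorem2 (d n k : nat) (hd : 1 <= d) :
  #|Lset d n k| =
  \sum_(0 <= m < (minn n k).+1)
     (m`! * stirling2_le d n m) * (m`! * stirling2_le d k m).
Proof.
rewrite card_Lset (big_cat_nat _ (n := (minn n k).+1)) //=; last by rewrite ltnS geq_minl.
rewrite [X in _ + X]big_nat_cond [X in _ + X]big1 ?addn0.
  by apply: eq_bigr => m _; rewrite !card_surj_le.
move=> m /andP [/andP [lt_min_m lt_m_n] _].
by rewrite (@surj_le_empty d k m) ?cards0 ?muln0 //; lia.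
Qed.
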